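(* A finite groupoid $\langle A;\cdot\rangle$ with an identity element is an Abelian algebra if and only if it is a commutative group.
   Context: A groupoid is an algebra $\langle A;\cdot\rangle$ with one binary operation; an identity element is $1\in A$ with $1\cdot a=a\cdot 1=a$ for all $a$. A polynomial operation of an algebra is an operation obtained from a term by substituting elements of the algebra for some of its variables. An algebra is called Abelian if for every polynomial operation $t(x,y_1,\ldots,y_n)$ and all elements $u,v,c_1,\ldots,c_n,d_1,\ldots,d_n$ of the algebra, $t(u,c_1,\ldots,c_n)=t(u,d_1,\ldots,d_n)$ implies $t(v,c_1,\ldots,c_n)=t(v,d_1,\ldots,d_n)$. *)

From mathcomp Require Import all_boot.
Set Implicit Arguments. Unset Strict Implicit. Unset Printing Implicit Defensive.

(* Terms in the language of one binary operation, with variables indexed by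
   nat and constants from the carrier (so evaluated terms give exactly the
   polynomial operations). *)
Inductive gterm (A : Type) : Type :=
| GVar : nat -> gterm A
| GConst : A -> gterm A
| GOp : gterm A -> gterm A -> gterm A.

Fixpoint geval (A : Type) (op : A -> A -> A) (env : nat -> A) (t : gterm A) : A :=
  match t with
  | GVar i => env i
  | GConst a => a
  | GOp t1 t2 => op (geval op env t1) (geval op env t2)
  end.

(* environment x |-> u (variable 0), y_i |-> c i (variables i >= 1) *)
Definition scons (A : Type) (u : A) (c : nat -> A) : nat -> A :=
  fun i => match i with 0 => u | S j => c j end.

Definition abelian_groupoid (A : Type) (op : A -> A -> A) : Prop :=
  forall (t : gterm A) (u v : A) (c d : nat -> A),
    geval op (scons u c) t = geval op (scons u d) t ->
    geval op (scons v c) t = geval op (scons v d) t.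

Definition is_identity (A : Type) (op : A -> A -> A) (e : A) : Prop :=
  forall a, op e a = a /\ op a e = a.

Definition is_comm_group (A : Type) (op : A -> A -> A) (e : A) : Prop :=
  (forall a b c, op a (op b c) = op (op a b) c) /\
  (forall a b, op a b = op b a) /\
  is_identity op e /\
  (forall a, exists b, op a b = e /\ op b a = e).

From mathcomp Require Import all_boot.
Set Implicit Arguments. Unset Strict Implicit. Unset Printing Implicit Defensive.

(* If the groupoid is Abelian, instances of the term condition for the terms
   [(y1 * x) * y2] and [x * y1] with [x] in {1, v} yield commutativity, the
   exchange law [(a b) c = b (a c)] (hence associativity) and cancellation;
   finiteness turns cancellation into inverses.  Conversely, in a commutative
   group a polynomial [t(x, c)] equals [x^k t(1, c)], where [k] counts the
   occurrences of [x] in [t], so [t(u, c) = t(u, d)] cancels to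
   [t(1, c) = t(1, d)] and gives [t(v, c) = t(v, d)]. *)

Section AbelianGroupoid.
Variables (A : Type) (op : A -> A -> A) (e : A).
Hypotheses (he : is_identity op e) (abelianA : abelian_groupoid op).

Let op1x a : op e a = a. Proof. exact: (he a).1. Qed.
Let opx1 a : op a e = a. Proof. exact: (he a).2. Qed.

Let exchange_term : gterm A := GOp (GOp (GVar A 1) (GVar A 0)) (GVar A 2).

Let exchange_termE (v a b : A) :
  geval op (scons v (fun i => if i is 0 then a else b)) exchange_term = op (op a v) b.
Proof. by []. Qed.

Lemma abelian_comm a b : op a b = op b a.
Proof.
have := @abelianA exchange_term e b (fun i => if i is 0 then a else e)
                            (fun i => if i is 0 then e else a).
by rewrite !exchange_termE !op1x !opx1 => ->.
Qed.

Lemma abelian_exchange a b c : op (op a b) c = op b (op a c).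
Proof.
have := @abelianA exchange_term e b (fun i => if i is 0 then a else c)
                            (fun i => if i is 0 then e else op a c).
by rewrite !exchange_termE !op1x opx1 => ->.
Qed.

Lemma abelian_assoc a b c : op a (op b c) = op (op a b) c.
Proof.
by rewrite abelian_comm (abelian_comm b) abelian_exchange (abelian_comm c) -abelian_exchange.
Qed.

Lemma abelian_cancel a : injective (op a).
Proof.
move=> b b' eq_ab.
have := @abelianA (GOp (GVar A 0) (GVar A 1)) a e (fun=> b) (fun=> b') eq_ab.
by rewrite /= !op1x.
Qed.

End AbelianGroupoid.

Fixpoint gdeg (A : Type) (t : gterm A) : nat :=
  match t with
  | GVar 0 => 1
  | GVar _ | GConst _ => 0
  | GOp t1 t2 => gdeg t1 + gdeg t2
  end.

Section CommMonoid.
Variables (A : Type) (op : A -> A -> A) (e : A).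
Hypotheses (opA : forall a b c, op a (op b c) = op (op a b) c)
           (opC : forall a b, op a b = op b a)
           (he : is_identity op e).

Definition pow (u : A) (k : nat) : A := iter k (op u) e.

Lemma pow_add u m n : op (pow u m) (pow u n) = pow u (m + n).
Proof.
elim: m => [|m IHm]; first exact: (he _).1.
by rewrite /pow /= -opA [op _ (iter n _ _)]IHm.
Qed.

Lemma opACA a b c d : op (op a b) (op c d) = op (op a c) (op b d).
Proof. by rewrite -!opA (opA b) (opC b c) -opA. Qed.

Lemma geval_scons_pow u c t :
  geval op (scons u c) t = op (pow u (gdeg t)) (geval op (scons e c) t).
Proof.
elim: t => [[|j]|a|t1 IH1 t2 IH2] /=; rewrite ?(he _).1 ?(he _).2 //.
by rewrite IH1 IH2 opACA pow_add.
Qed.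

Lemma cancel_comm_monoid_abelian :
  (forall a, injective (op a)) -> abelian_groupoid op.
Proof.
move=> cancel t u v c d.
rewrite !(geval_scons_pow u) !(geval_scons_pow v) => eq_u.
by rewrite (cancel _ _ _ eq_u).
Qed.

End CommMonoid.

Theorem mainTheorem2 (A : finType) (op : A -> A -> A) (e : A)
  (he : is_identity op e) :
  abelian_groupoid op <-> is_comm_group op e.
Proof.
split=> [abelianA | [opA [opC [_ opV]]]].
- split; first exact: abelian_assoc he abelianA.
  split; first exact: abelian_comm he abelianA.
  split=> // a.
  have /codomP [b ab_e] := injF_onto (abelian_cancel he abelianA (a:=a)) e.
  by exists b; rewrite (abelian_comm he abelianA b).
- apply: (cancel_comm_monoid_abelian opA opC he) => a b b' eq_ab.
  have [a' [_ a'a]] := opV a.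
  by rewrite -[b](he _).1 -[b'](he _).1 -a'a -!opA eq_ab.
Qed.
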